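(* Let $\lambda=(\lambda_1,\dots,\lambda_r)$ be a partition of $n$ with conjugate $\lambda'=(\lambda'_1,\dots,\lambda'_{r'})$, and let $i\ge 1$. Then $h_{2,1}(\lambda)\ge i$ and $h_{1,2}(\lambda)\ge i$ if and only if each of the two character polynomials $q_{[\lambda_2,\dots,\lambda_r]}$ and $q_{[\lambda'_2,\dots,\lambda'_{r'}]}$ contains, in some monomial with non-zero coefficient, a variable $x_j$ with $j\ge i$.
   Context: For a partition $\lambda$ and a cell $(x,y)$ of its Young (Ferrers) diagram (row $x$, column $y$, English convention), $h_{x,y}(\lambda)$ is the hook length at $(x,y)$, i.e. the number of cells to the right of $(x,y)$ in row $x$, plus the number of cells below it in column $y$, plus one; if $(x,y)$ is not a cell of $\lambda$ set $h_{x,y}(\lambda)=0$. For a partition $\mu$ of $m$ (possibly empty, $m=0$), its character polynomial is $q_\mu(x_1,\dots,x_m)=\downarrow\Big(\sum_{\alpha\vdash m}\frac{\chi_\mu(\alpha)}{z_\alpha}\prod_{k=1}^m (k x_k-1)^{a_k}\Big)$, where the sum is over partitions (cycle types) $\alpha=(1^{a_1},2^{a_2},\dots,m^{a_m})$ of $m$, $\chi_\mu(\alpha)$ is the irreducible character of $S_m$ indexed by $\mu$ evaluated at cycle type $\alpha$, $z_\alpha=\prod_k a_k!\,k^{a_k}$, and $\downarrow$ is the linear map sending each monomial $x_1^{c_1}\cdots x_m^{c_m}$ to the product of falling factorials $(x_1)_{c_1}\cdots(x_m)_{c_m}$. (For $\mu$ empty, $q_\mu=1$.) It satisfies $\chi_\lambda(\alpha)=q_{[\lambda_2,\dots,\lambda_r]}(a_1,\dots,a_{n-\lambda_1})$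 for every cycle type $\alpha=(1^{a_1},\dots,n^{a_n})$ of $S_n$. *)

From HB Require Import structures.
From mathcomp Require Import all_boot all_order all_algebra.
Set Implicit Arguments. Unset Strict Implicit. Unset Printing Implicit Defensive.
Import Order.TTheory GRing.Theory Num.Theory.
Local Open Scope ring_scope.

Definition is_partition (n : nat) (lam : seq nat) : bool :=
  [&& sorted geq lam, all (fun p => 0 < p)%N lam & sumn lam == n].

Definition conj_part (lam : seq nat) : seq nat :=
  [seq count (fun p => j <= p)%N lam | j <- iota 1 (head 0%N lam)].

(* 1-indexed parts; 0 beyond the length *)
Definition part (lam : seq nat) (x : nat) : nat := nth 0%N lam x.-1.

(* hook length h_{x,y}(lam) (row x, column y, 1-indexed), 0 if not a cell *)
Definition hook (lam : seq nat) (x y : nat) : nat :=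
  if [&& (1 <= x)%N, (1 <= y)%N & (y <= part lam x)%N]
  then ((part lam x - y) + (part (conj_part lam) y - x) + 1)%N
  else 0%N.

(* Murnaghan--Nakayama rule on beta-sets (abacus form): removing a rim hook
   of length k = replacing a bead x by x - k (not already a bead), with sign
   (-1)^(number of beads strictly between x - k and x). *)
Fixpoint mn (b rho : seq nat) {struct rho} : int :=
  match rho with
  | [::] => if perm_eq b (iota 0 (size b)) then 1 else 0
  | k :: rho' =>
      foldr (fun x acc =>
               (-1) ^+ (count (fun y => (x - k < y)%N && (y < x)%N) b)
               * mn ((x - k)%N :: rem x b) rho' + acc) 0
            [seq x <- b | (k <= x)%N && ((x - k)%N \notin b)]
  end.

(* beta-set of mu: mu_j + l - j, j = 1..l, l = length of mu *)
Definition beta (mu : seq nat) : seq nat :=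
  [seq (nth 0%N mu j + (size mu).-1 - j)%N | j <- iota 0 (size mu)].

(* chi_mu evaluated at a cycle type given as the list of its cycle lengths *)
Definition chi (mu : seq nat) (alpha : seq nat) : int := mn (beta mu) alpha.

(* A polynomial in x_1..x_m is a formal sum of terms (coefficient, exponent
   vector of length m), entry k-1 of the vector being the exponent of x_k. *)
Definition mpoly := seq (rat * seq nat).

Definition mp_coef (p : mpoly) (c : seq nat) : rat :=
  \sum_(t <- p | t.2 == c) t.1.

Definition mp_add (p q : mpoly) : mpoly := p ++ q.
Definition mp_scale (a : rat) (p : mpoly) : mpoly := [seq (a * t.1, t.2) | t <- p].
Definition mp_mul (p q : mpoly) : mpoly :=
  [seq (s.1 * t.1, [seq (u.1 + u.2)%N | u <- zip s.2 t.2]) | s <- p, t <- q].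
Definition mp_const (m : nat) (a : rat) : mpoly := [:: (a, nseq m 0%N)].
(* the variable x_k, 1 <= k <= m *)
Definition mp_var (m k : nat) : mpoly :=
  [:: (1, [seq nat_of_bool (j == k.-1) | j <- iota 0 m])].
Definition mp_pow (m : nat) (p : mpoly) (e : nat) : mpoly :=
  iter e (mp_mul p) (mp_const m 1).

Definition mp_falling (m k c : nat) : mpoly :=
  \big[mp_mul/mp_const m 1]_(0 <= j < c) mp_add (mp_var m k) (mp_const m (- (j%:R))).

(* the linear map "down-arrow": x_1^{c_1}..x_m^{c_m} |-> (x_1)_{c_1}..(x_m)_{c_m} *)
Definition down (m : nat) (p : mpoly) : mpoly :=
  \big[mp_add/[::]]_(t <- p)
     mp_scale t.1 (\big[mp_mul/mp_const m 1]_(0 <= k < m) mp_falling m k.+1 (nth 0%N t.2 k)).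

(* cycle types alpha = (1^{a_1},..,m^{a_m}) of S_m, encoded by their
   multiplicity vectors a = [:: a_1; ...; a_m] (entry k-1 is a_k). *)
Fixpoint vecs (len bound : nat) : seq (seq nat) :=
  match len with
  | 0 => [:: [::]]
  | l.+1 => [seq x :: v | x <- iota 0 bound.+1, v <- vecs l bound]
  end.
Definition cycle_types (m : nat) : seq (seq nat) :=
  [seq a <- vecs m m | (\sum_(0 <= k < m) k.+1 * nth 0 a k)%N == m].
Definition cyc_list (m : nat) (a : seq nat) : seq nat :=
  flatten [seq nseq (nth 0%N a k) k.+1 | k <- iota 0 m].
Definition zee (m : nat) (a : seq nat) : nat :=
  (\prod_(0 <= k < m) ((nth 0 a k)`! * k.+1 ^ (nth 0 a k)))%N.

Definition charpoly_m (m : nat) (mu : seq nat) : mpoly :=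
  down m (\big[mp_add/[::]]_(a <- cycle_types m)
     mp_scale ((chi mu (cyc_list m a))%:~R / (zee m a)%:R)
       (\big[mp_mul/mp_const m 1]_(0 <= k < m)
          mp_pow m (mp_add (mp_scale (k.+1)%:R (mp_var m k.+1)) (mp_const m (-1)))
                 (nth 0%N a k))).

Definition charpoly (mu : seq nat) : mpoly := charpoly_m (sumn mu) mu.

Definition has_var_ge (i : nat) (q : mpoly) : Prop :=
  exists c : seq nat, mp_coef q c != 0 /\
    exists j : nat, (i <= j)%N /\ (0 < nth 0%N c j.-1)%N.

From mathcomp Require Import all_boot all_order all_algebra.
From mathcomp Require Import zify.
Set Implicit Arguments. Unset Strict Implicit. Unset Printing Implicit Defensive.
Import Order.TTheory GRing.Theory Num.Theory.
Local Open Scope ring_scope.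

(* For a partition [mu] of [m] with principal hook length [H = mu_1 + l(mu) - 1]
   and [i >= 1], [q_mu] involves a variable [x_j] with [j >= i] iff [i <= H].
   The map [down] only lowers exponents and the exponents of
   [prod_k (k x_k - 1)^(a_k)] lie below [a], so every monomial of [q_mu] lies
   below a cycle type [a] with [chi_mu(a) <> 0]; by Murnaghan-Nakayama no such
   [a] has a cycle longer than the largest bead [H] of the beta-set of [mu].
   Conversely, cycle types all have weight [m], so they are maximal exponents:
   the coefficient of [x_1^(m-H) x_H] in [q_mu] is a nonzero multiple of
   [chi_mu(1^(m-H) H)], and [chi_mu(1^(m-H) H) <> 0] because, removing
   single boxes first and the principal hook last, every Murnaghan-Nakayama
   contribution has the sign [(-1)^(l(mu)-1)]. The theorem follows since
   [h_{2,1}(lam)] and [h_{1,2}(lam)] are the principal hook lengths of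
   [(lam_2, ...)] and [(lam'_2, ...)]. *)

Lemma sum_neq0_witness (T : eqType) (V : nmodType) (s : seq T) (F : T -> V) :
  \sum_(x <- s) F x != 0 -> exists2 x, x \in s & F x != 0.
Proof.
elim: s => [|x s IH]; first by rewrite big_nil eqxx.
rewrite big_cons; have [->|nz _] := eqVneq (F x) 0; last by exists x; rewrite ?mem_head.
by rewrite add0r => /IH [y ys nzy]; exists y; rewrite // in_cons ys orbT.
Qed.

Lemma mulr_signnn (R : pzRingType) n : (-1) ^+ n * (-1) ^+ n = 1 :> R.
Proof. by rewrite -expr2 -exprM mulnC exprM sqrrN !expr1n. Qed.

Definition move_bead (b : seq nat) (x k : nat) : seq nat := (x - k)%N :: rem x b.

Lemma size_move_bead b x k : x \in b -> size (move_bead b x k) = size b.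
Proof. by move=> xb; rewrite /= size_rem // prednK //; case: (b) xb. Qed.

Lemma uniq_move_bead b x k :
  uniq b -> x \in b -> (x - k)%N \notin b -> uniq (move_bead b x k).
Proof. by move=> ub xb nb /=; rewrite rem_uniq // andbT; apply: contra nb; apply: mem_rem. Qed.

Lemma sumn_move_bead b x k : x \in b -> (k <= x)%N ->
  (sumn (move_bead b x k) + k)%N = sumn b.
Proof. by move=> xb kx; rewrite /= (perm_sumn (perm_to_rem xb)) /=; lia. Qed.

Lemma mn_cons b k rho : mn b (k :: rho) =
  \sum_(x <- [seq x <- b | (k <= x)%N && ((x - k)%N \notin b)])
     (-1) ^+ count (fun y => (x - k < y)%N && (y < x)%N) b * mn (move_bead b x k) rho.
Proof.
rewrite /=; elim: [seq _ <- _ | _] => [|x s IH]; first by rewrite big_nil.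
by rewrite big_cons /= IH.
Qed.

Lemma mn_nil b : mn b [::] = (perm_eq b (iota 0 (size b)))%:R.
Proof. by rewrite /=; case: ifP. Qed.

(* A move by one box jumps over no bead. *)
Lemma mn_cons1 b rho : mn b (1%N :: rho) =
  \sum_(x <- [seq x <- b | (1 <= x)%N && ((x - 1)%N \notin b)]) mn (move_bead b x 1) rho.
Proof.
rewrite mn_cons; apply: eq_bigr => x _.
rewrite (@eq_count _ _ pred0); first by rewrite count_pred0 expr0 mul1r.
by move=> y /=; apply/negbTE; lia.
Qed.

Lemma all_move_bead M b x k :
  all (fun y => y <= M)%N b -> x \in b -> all (fun y => y <= M)%N (move_bead b x k).
Proof.
move=> bM xb; rewrite /= (leq_trans (leq_subr _ _) (allP bM x xb)).
by apply/allP => y /mem_rem /(allP bM).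
Qed.

Lemma mn_neq0_parts_le M b rho :
  all (fun x => x <= M)%N b -> mn b rho != 0 -> all (fun k => k <= M)%N rho.
Proof.
elim: rho b => [|k rho IH] b //= bM.
rewrite -/(mn b (k :: rho)) mn_cons => /sum_neq0_witness [x].
rewrite mem_filter => /andP[/andP[kx _] xb]; rewrite mulf_eq0 negb_or => /andP[_ nz].
by rewrite (leq_trans kx (allP bM x xb)) (IH _ (all_move_bead _ bM xb) nz).
Qed.

Lemma mn_neq0_sumn b rho :
  mn b rho != 0 -> sumn b = (sumn rho + sumn (iota 0 (size b)))%N.
Proof.
elim: rho b => [|k rho IH] b.
  by rewrite mn_nil; case: (boolP (perm_eq _ _)) => [/perm_sumn -> | _]; rewrite ?eqxx.
rewrite mn_cons => /sum_neq0_witness [x].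
rewrite mem_filter => /andP[/andP[kx _] xb]; rewrite mulf_eq0 negb_or => /andP[_ /IH].
by rewrite size_move_bead // -(sumn_move_bead xb kx) /=; lia.
Qed.

Lemma count_inner_beads M b : uniq b -> M \in b -> (0 < M)%N ->
  perm_eq (0%N :: rem M b) (iota 0 (size b)) ->
  count (fun y => (0 < y < M)%N) b = (size b).-1.
Proof.
move=> ub Mb M0 pe.
have szb : (0 < size b)%N by case: (b) Mb.
have pe' : perm_eq (rem M b) (iota 1 (size b).-1).
  by move: pe; rewrite -(prednK szb) /= perm_cons.
rewrite (permP (perm_to_rem Mb)) /= ltnn andbF add0n (permP pe').
have MnR : M \notin rem M b by rewrite (mem_rem_uniq _ ub) inE eqxx.
rewrite -{2}(size_iota 1 (size b).-1); apply/eqP; rewrite -all_count; apply/allP => y.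
rewrite mem_iota => /andP[y1 yl] /=; rewrite y1 /=; rewrite ltnNge; apply/negP => My.
by move: MnR; rewrite (perm_mem pe') mem_iota; lia.
Qed.

(* Removing the hook of length [M], the largest admissible bead, leaves the empty
   partition exactly when the other beads are [1, ..., l - 1]; its leg is [l - 1]. *)
Lemma mn_single_hook M b : (0 < M)%N -> uniq b -> all (fun x => x <= M)%N b ->
  (-1) ^+ (size b).-1 * mn b [:: M] = (perm_eq (0%N :: rem M b) (iota 0 (size b)))%:R.
Proof.
move=> M0 ub bM; rewrite mn_cons mulr_sumr.
set pe := perm_eq _ _.
have termE x : x \in b -> (M <= x)%N ->
    (-1) ^+ (size b).-1 * ((-1) ^+ count (fun y => (x - M < y < x)%N) b *
       mn (move_bead b x M) [::]) = pe%:R.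
  move=> xb Mx; have xM : x = M by apply/eqP; rewrite eqn_leq Mx (allP bM x xb).
  subst x; rewrite mn_nil size_move_bead // /move_bead subnn -/pe.
  case: (boolP pe) => [pe1|_]; last by rewrite !mulr0.
  by rewrite mulr1 count_inner_beads ?mulr_signnn.
case: (boolP pe) => [pe1|npe]; last first.
  rewrite big1_seq // => x /andP[_]; rewrite mem_filter => /andP[/andP[Mx _] xb].
  by rewrite termE // (negbTE npe).
have Mb : M \in b.
  apply: contraTT pe1 => /rem_id; rewrite /pe => ->.
  by apply/negP => /perm_size; rewrite size_iota /=; lia.
have b0 : 0%N \notin b.
  move: (perm_uniq pe1); rewrite iota_uniq /= (mem_rem_uniq _ ub) inE negb_and negbK.
  by case/andP => /orP[/eqP M0'|//]; rewrite -M0' in M0.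
have -> : [seq x <- b | (M <= x)%N && ((x - M)%N \notin b)] = [:: M].
  rewrite -(filter_pred1_uniq ub Mb); apply: eq_in_filter => x xb /=.
  have [->|xM] := eqVneq x M; first by rewrite leqnn subnn (negbTE b0).
  by rewrite leqNgt ltn_neqAle xM (allP bM x xb).
by rewrite big_seq1 termE // pe1.
Qed.

Lemma mn_hook_sign_ge0 M r b : (0 < M)%N -> uniq b -> all (fun x => x <= M)%N b ->
  0 <= (-1) ^+ (size b).-1 * mn b (nseq r 1%N ++ [:: M]).
Proof.
move=> M0; elim: r b => [|r IH] b ub bM; first by rewrite mn_single_hook.
rewrite /= -/(mn b (1%N :: (nseq r 1%N ++ [:: M]))) mn_cons1 mulr_sumr big_seq.
apply: sumr_ge0 => x; rewrite mem_filter => /andP[/andP[x1 nb] xb].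
rewrite -(size_move_bead 1 xb); apply: IH; first exact: uniq_move_bead.
exact: all_move_bead.
Qed.

Lemma perm_iota1_pred_closed (s : seq nat) : uniq s -> all (fun y => 0 < y)%N s ->
  (forall y, y \in s -> (2 <= y)%N -> y.-1 \in s) -> perm_eq s (iota 1 (size s)).
Proof.
move=> us ps cl.
have sub_in d y : y \in s -> (d < y)%N -> (y - d)%N \in s.
  elim: d y => [|d IH] y ys dy; first by rewrite subn0.
  have := cl _ (IH y ys (ltnW dy)); rewrite (_ : (2 <= y - d)%N); last by lia.
  by rewrite -subn1 -subnDA addn1 => /(_ isT).
have le_size y : y \in s -> (y <= size s)%N.
  move=> ys; rewrite -{1}(size_iota 1 y); apply: uniq_leq_size; first exact: iota_uniq.
  move=> z; rewrite mem_iota => /andP[z1 zy].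
  by rewrite (_ : z = y - (y - z))%N; [apply: sub_in => //; lia | lia].
have sub : {subset s <= iota 1 (size s)}.
  by move=> y ys; rewrite mem_iota add1n ltnS le_size // (allP ps y ys).
have [_ eqm] := uniq_min_size us sub (eq_leq (size_iota _ _)).
by apply: uniq_perm => //; exact: iota_uniq.
Qed.

Lemma perm_hook_beads M b : uniq b -> M \in b ->
  all (fun x => (0 < x <= M)%N) b ->
  all (fun x => (x == M) || (x < 2)%N || (x.-1 \in b)) b ->
  perm_eq (0%N :: rem M b) (iota 0 (size b)).
Proof.
move=> ub Mb bM cl.
have -> : size b = (size (rem M b)).+1 by rewrite size_rem // prednK //; case: (b) Mb.
rewrite /= perm_cons; apply: perm_iota1_pred_closed; first exact: rem_uniq.
  by apply/allP => y /mem_rem /(allP bM) /andP[].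
move=> y; rewrite (mem_rem_uniq _ ub) inE => /andP[yM yb] y2.
rewrite (mem_rem_uniq _ ub) inE.
case/orP: (allP cl y yb) => [/orP[/eqP yM'|]|yb1].
- by rewrite yM' eqxx in yM.
- by rewrite ltnNge y2.
have /andP[_ yleM] := allP bM y yb.
by rewrite yb1 andbT; apply: contraTneq yleM => e; lia.
Qed.

(* Slide beads down one box at a time until the beads other than [M] are
   [1, ..., l - 1]; then the single hook of length [M] remains. *)
Lemma mn_hook_sign_gt0 M b : uniq b -> M \in b -> all (fun x => (0 < x <= M)%N) b ->
  exists r, 0 < (-1) ^+ (size b).-1 * mn b (nseq r 1%N ++ [:: M]).
Proof.
have [N] := ubnP (sumn b); elim: N b => // N IH b sN ub Mb bM.
have bleM : all (fun x => x <= M)%N b by apply: sub_all bM => x /andP[].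
have M0 : (0 < M)%N by have /andP[] := allP bM M Mb.
case: (boolP (all (fun x => (x == M) || (x < 2)%N || (x.-1 \in b)) b)) => [cl|].
  by exists 0%N; rewrite /= mn_single_hook // perm_hook_beads.
case/allPn => x xb; rewrite !negb_or -leqNgt => /andP[/andP[xM x2] nb].
have nb' : (x - 1)%N \notin b by rewrite subn1.
have x1 : (1 <= x)%N by lia.
have [r r_pos] : exists r, 0 < (-1) ^+ (size b).-1 * mn (move_bead b x 1) (nseq r 1%N ++ [:: M]).
  rewrite -(size_move_bead 1 xb); apply: IH.
  - by rewrite -(sumn_move_bead xb x1) in sN; lia.
  - exact: uniq_move_bead.
  - by rewrite inE (mem_rem_uniq _ ub) inE Mb andbT (eq_sym M x) xM orbT.
  rewrite /= (_ : (0 < x - 1)%N); last by lia.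
  rewrite (leq_trans (leq_subr _ _)) /=; last by have /andP[] := allP bM x xb.
  by apply/allP => y /mem_rem /(allP bM).
exists r.+1; rewrite /= -/(mn b (1%N :: (nseq r 1%N ++ [:: M]))) mn_cons1 mulr_sumr.
rewrite (bigD1_seq x) /=; first last.
- exact: filter_uniq.
- by rewrite mem_filter xb nb' x1.
apply: (lt_le_trans r_pos); rewrite lerDl.
rewrite big_seq_cond; apply: sumr_ge0 => y.
rewrite mem_filter => /andP[/andP[/andP[y1 nby] yb] _].
rewrite -(size_move_bead 1 yb); apply: mn_hook_sign_ge0 => //.
  exact: uniq_move_bead.
exact: all_move_bead.
Qed.

Definition principal_hook (mu : seq nat) : nat :=
  if mu is x :: _ then (x + size mu).-1 else 0.

Lemma nth_sorted_geq (mu : seq nat) i j : sorted geq mu -> (i <= j)%N -> (j < size mu)%N ->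
  (nth 0 mu j <= nth 0 mu i)%N.
Proof.
move=> mus ij js.
have geq_trans : transitive geq by move=> a b c ba cb; apply: leq_trans cb ba.
exact: (sorted_leq_nth geq_trans leqnn 0%N mus) (leq_ltn_trans ij js) js ij.
Qed.

Lemma size_beta (mu : seq nat) : size (beta mu) = size mu.
Proof. by rewrite size_map size_iota. Qed.

Lemma sumn_beta (mu : seq nat) : sumn (beta mu) = (sumn mu + sumn (iota 0 (size mu)))%N.
Proof.
have ei : iota 0 (size mu) = index_iota 0 (size mu) by rewrite /index_iota subn0.
rewrite !sumnE big_map [X in (_ = X + _)%N](big_nth 0%N) ei.
rewrite [X in (_ = _ + X)%N](big_nat_rev _ _ _ _ xpredT (fun i => i)) -big_split /=.
by apply: eq_big_nat => j /andP[_ jl]; lia.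
Qed.

Section BetaSet.

Variable mu : seq nat.
Hypothesis mu_sorted : sorted geq mu.

Lemma beta_uniq : uniq (beta mu).
Proof.
rewrite map_inj_in_uniq ?iota_uniq // => i j; rewrite !mem_iota !add0n => il jl.
wlog ij : i j il jl / (i <= j)%N.
  by move=> W; case: (leqP i j) => [|/ltnW] h e; [exact: W | apply/esym/W].
by have := nth_sorted_geq mu_sorted ij jl; lia.
Qed.

Hypothesis mu_pos : all (fun p => 0 < p)%N mu.
Hypothesis mu_size_gt0 : (0 < size mu)%N.

Lemma principal_hookE : principal_hook mu = (nth 0 mu 0 + (size mu).-1)%N.
Proof. by case: (mu) mu_size_gt0 => //= x s _; rewrite addnS. Qed.

Lemma principal_hook_beta : principal_hook mu \in beta mu.
Proof. by rewrite principal_hookE; apply/mapP; exists 0%N; rewrite ?mem_iota ?subn0. Qed.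

Lemma beta_range : all (fun x => (0 < x <= principal_hook mu)%N) (beta mu).
Proof.
rewrite principal_hookE; apply/allP => x /mapP [j]; rewrite mem_iota /= => jl ->.
have := nth_sorted_geq mu_sorted (leq0n j) jl.
have : (0 < nth 0 mu j)%N by apply: (allP mu_pos); rewrite mem_nth.
lia.
Qed.

End BetaSet.

Lemma chi_hook_neq0 (mu : seq nat) : sorted geq mu -> all (fun p => 0 < p)%N mu ->
  (0 < size mu)%N ->
  chi mu (nseq (sumn mu - principal_hook mu) 1%N ++ [:: principal_hook mu]) != 0.
Proof.
move=> mus mup mu0.
have [r r_pos] := mn_hook_sign_gt0 (beta_uniq mus) (principal_hook_beta mu0) (beta_range mus mup mu0).
have nz : mn (beta mu) (nseq r 1%N ++ [:: principal_hook mu]) != 0.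
  by apply: contraTneq r_pos => ->; rewrite mulr0 ltxx.
have := mn_neq0_sumn nz; rewrite sumn_beta size_beta sumn_cat sumn_nseq /= => e.
by rewrite /chi (_ : (sumn mu - principal_hook mu = r)%N) //; lia.
Qed.

Lemma chi_neq0_parts_le (mu : seq nat) rho : sorted geq mu -> all (fun p => 0 < p)%N mu ->
  chi mu rho != 0 -> all (fun k => k <= principal_hook mu)%N rho.
Proof.
move=> mus mup; case: (posnP (size mu)) => [/size0nil ->|mu0].
  by case: rho => //= k rho; rewrite -/(mn [::] (k :: rho)) mn_cons big_nil eqxx.
by apply: mn_neq0_parts_le; apply: sub_all (beta_range mus mup mu0) => x /andP[].
Qed.

Definition addv (s t : seq nat) : seq nat := [seq (u.1 + u.2)%N | u <- zip s t].
Definition lev (c e : seq nat) : bool := all2 leq c e.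

Lemma lev_refl : reflexive lev.
Proof. by elim=> //= x e ->; rewrite leqnn. Qed.

Lemma lev_trans : transitive lev.
Proof.
move=> d c e; elim: c d e => [|x c IH] [|y d] [|z e] //= /andP[yx H1] /andP[xz H2].
by rewrite (leq_trans yx xz) (IH _ _ H1 H2).
Qed.

Lemma lev_anti c e : lev c e -> lev e c -> c = e.
Proof.
elim: c e => [|x c IH] [|y e] //= /andP[xy H1] /andP[yx H2].
by rewrite (IH _ H1 H2); congr (_ :: _); apply/eqP; rewrite eqn_leq xy yx.
Qed.

Lemma lev_size c e : lev c e -> size c = size e.
Proof. by elim: c e => [|x c IH] [|y e] //= /andP[_ /IH ->]. Qed.

Lemma lev_nth c e : lev c e -> forall j, (nth 0 c j <= nth 0 e j)%N.
Proof. by elim: c e => [|x c IH] [|y e] //= /andP[xy H] [|j] //=; apply: IH. Qed.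

Lemma lev0 e : lev (nseq (size e) 0%N) e.
Proof. by elim: e. Qed.

Lemma lev_addv s e t f : lev s e -> lev t f -> lev (addv s t) (addv e f).
Proof.
elim: s e t f => [|x s IH] [|y e] [|z t] [|w f] //= /andP[xy H1] /andP[zw H2].
by rewrite (leq_add xy zw) (IH _ _ _ H1 H2).
Qed.

Lemma eq_addv_lev s e t f : lev s e -> lev t f -> size e = size f ->
  (addv s t == addv e f) = (s == e) && (t == f).
Proof.
elim: s e t f => [|x s IH] [|y e] [|z t] [|w f] //= /andP[xy H1] /andP[zw H2] [sz].
rewrite !eqseq_cons (IH _ _ _ H1 H2 sz).
case: (eqVneq x y) => [->|xy']; case: (eqVneq z w) => [->|zw'] /=; rewrite ?eqxx ?andbF //.
- by rewrite eqn_add2l (negbTE zw').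
- by rewrite eqn_add2r (negbTE xy').
have ltxy : (x < y)%N by rewrite ltn_neqAle xy' xy.
have : (x + z < y + w)%N by lia.
by rewrite ltn_neqAle => /andP[/negbTE ->].
Qed.

Lemma size_addv s t : size (addv s t) = minn (size s) (size t).
Proof. by rewrite size_map size_zip. Qed.

Lemma nth_addv s t j : size s = size t -> nth 0 (addv s t) j = (nth 0 s j + nth 0 t j)%N.
Proof.
move=> sz; case: (ltnP j (size s)) => js.
  by rewrite (nth_map (0, 0)%N) ?size_zip ?sz ?minnn -?sz // nth_zip.
by rewrite !nth_default ?size_addv ?sz ?minnn -?sz.
Qed.

Definition sumv (m : nat) (r : seq (seq nat)) : seq nat := foldr addv (nseq m 0%N) r.

Lemma size_sumv m r : all (fun d => size d == m) r -> size (sumv m r) = m.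
Proof.
elim: r => [|d r IH] /=; first by rewrite size_nseq.
by move=> /andP[/eqP sd /IH sr]; rewrite size_addv sd sr minnn.
Qed.

Lemma nth_sumv m r j : all (fun d => size d == m) r ->
  nth 0 (sumv m r) j = (\sum_(d <- r) nth 0 d j)%N.
Proof.
elim: r => [|d r IH] /=; first by rewrite big_nil nth_nseq; case: ifP.
by move=> /andP[/eqP sd H]; rewrite big_cons nth_addv ?IH // size_sumv // sd.
Qed.

Definition scalev (n : nat) (d : seq nat) : seq nat := [seq (n * x)%N | x <- d].

Lemma size_scalev n d : size (scalev n d) = size d.
Proof. by rewrite size_map. Qed.

Lemma scalev0 d : scalev 0 d = nseq (size d) 0%N.
Proof. by elim: d => //= x d ->. Qed.

Lemma addv_scalev n d : addv d (scalev n d) = scalev n.+1 d.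
Proof.
apply: (@eq_from_nth _ 0%N); rewrite ?size_addv ?size_map ?minnn // => j jd.
by rewrite nth_addv ?size_map // !(nth_map 0%N) // mulSn.
Qed.

Lemma sumv_nseq m c d : size d = m -> sumv m (nseq c d) = scalev c d.
Proof.
move=> sd; elim: c => [|c IH]; first by rewrite scalev0 sd.
by rewrite /= -/(sumv m (nseq c d)) IH addv_scalev.
Qed.

Definition unitv (m k : nat) : seq nat := [seq nat_of_bool (j == k) | j <- iota 0 m].

Lemma size_unitv m k : size (unitv m k) = m.
Proof. by rewrite size_map size_iota. Qed.

Lemma nth_unitv m k j : (j < m)%N -> nth 0%N (unitv m k) j = (j == k).
Proof. by move=> jm; rewrite (nth_map 0%N) ?size_iota // nth_iota. Qed.

Lemma unitv_neq0 m k : (k < m)%N -> nseq m 0%N != unitv m k.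
Proof.
move=> km; apply/negP => /eqP/(congr1 (fun s => nth 0%N s k)).
by rewrite nth_unitv // nth_nseq km eqxx.
Qed.

Lemma sum_nat_delta (f : nat -> nat) m j : (j < m)%N ->
  (\sum_(k <- index_iota 0 m) (f k * (j == k)))%N = f j.
Proof.
move=> jm; rewrite (bigD1_seq j) ?mem_index_iota ?iota_uniq //= eqxx muln1.
by rewrite big1 ?addn0 // => k kj; rewrite eq_sym (negbTE kj) muln0.
Qed.

Lemma sumv_unitv m e : size e = m ->
  sumv m [seq scalev (nth 0%N e k) (unitv m k) | k <- index_iota 0 m] = e.
Proof.
move=> se; set r := map _ _.
have sz : all (fun d => size d == m) r.
  by rewrite all_map; apply/allP => k _ /=; rewrite size_scalev size_unitv.
apply: (@eq_from_nth _ 0%N); first by rewrite size_sumv.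
rewrite size_sumv // => j jm; rewrite nth_sumv // big_map.
rewrite -(sum_nat_delta (nth 0%N e) jm); apply: eq_bigr => k _.
by rewrite (nth_map 0%N) ?size_unitv // nth_unitv.
Qed.

Lemma mp_coef_cat p q c : mp_coef (p ++ q) c = mp_coef p c + mp_coef q c.
Proof. by rewrite /mp_coef big_cat. Qed.

Lemma mp_coef_scale a p c : mp_coef (mp_scale a p) c = a * mp_coef p c.
Proof. by rewrite /mp_coef big_map mulr_sumr. Qed.

Lemma mp_coef_bigadd (I : Type) (r : seq I) (F : I -> mpoly) c :
  mp_coef (\big[mp_add/[::]]_(i <- r) F i) c = \sum_(i <- r) mp_coef (F i) c.
Proof.
elim: r => [|i r IH]; first by rewrite !big_nil /mp_coef big_nil.
by rewrite !big_cons /mp_add mp_coef_cat IH.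
Qed.

Lemma mem_bigadd (I : eqType) (r : seq I) (F : I -> mpoly) t :
  t \in \big[mp_add/[::]]_(i <- r) F i -> exists2 i, i \in r & t \in F i.
Proof.
elim: r => [|i r IH]; first by rewrite big_nil.
rewrite big_cons mem_cat => /orP[ti|/IH [j jr tj]]; first by exists i; rewrite ?mem_head.
by exists j; rewrite // in_cons jr orbT.
Qed.

Lemma mp_coef_neq0 p c : mp_coef p c != 0 -> exists2 t, t \in p & t.2 = c /\ t.1 != 0.
Proof.
rewrite /mp_coef; case: (boolP (has (fun t => (t.2 == c) && (t.1 != 0)) p)).
  by case/hasP => t tp /andP[/eqP e nz] _; exists t.
move/hasPn => H; rewrite big1_seq ?eqxx // => t /andP[tc tp].
by have := H t tp; rewrite tc /= negbK => /eqP.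
Qed.

Definition exps_le (p : mpoly) (e : seq nat) : bool := all (fun t => lev t.2 e) p.

Lemma exps_le_mem p e t : exps_le p e -> t \in p -> lev t.2 e.
Proof. by move/allP => H /H. Qed.

Lemma exps_le_coef p e c : exps_le p e -> mp_coef p c != 0 -> lev c e.
Proof. by move=> pe /mp_coef_neq0 [t tp [<- _]]; apply: exps_le_mem pe tp. Qed.

Lemma exps_le_const m a : exps_le (mp_const m a) (nseq m 0%N).
Proof. by rewrite /exps_le /= lev_refl. Qed.

Lemma mp_coef_const1 m : mp_coef (mp_const m 1) (nseq m 0%N) = 1.
Proof. by rewrite /mp_coef /mp_const big_cons big_nil eqxx addr0. Qed.

Lemma exps_le_mul p q e f : exps_le p e -> exps_le q f -> exps_le (mp_mul p q) (addv e f).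
Proof.
move=> pe qf; apply/allP => t /allpairsP [[s u] /= [sp uq ->]] /=.
exact: lev_addv (exps_le_mem pe sp) (exps_le_mem qf uq).
Qed.

Lemma mp_coef_mul_top p q e f : exps_le p e -> exps_le q f -> size e = size f ->
  mp_coef (mp_mul p q) (addv e f) = mp_coef p e * mp_coef q f.
Proof.
move=> pe qf sz; rewrite /mp_coef /mp_mul big_mkcond big_allpairs_dep /=.
rewrite (big_mkcond (fun i : rat * seq nat => i.2 == e)) mulr_suml; apply: eq_big_seq => s sp.
rewrite (big_mkcond (fun i : rat * seq nat => i.2 == f)) mulr_sumr; apply: eq_big_seq => u uq /=.
rewrite -/(addv s.2 u.2) eq_addv_lev ?(exps_le_mem pe sp) ?(exps_le_mem qf uq) //.
by case: (s.2 == e); case: (u.2 == f); rewrite ?mulr0 ?mul0r.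
Qed.

Lemma mp_bigmul_top (I : Type) (r : seq I) (F : I -> mpoly) (D : I -> seq nat) m :
  (forall i, size (D i) = m) -> (forall i, exps_le (F i) (D i)) ->
  exps_le (\big[mp_mul/mp_const m 1]_(i <- r) F i) (sumv m (map D r)) /\
  mp_coef (\big[mp_mul/mp_const m 1]_(i <- r) F i) (sumv m (map D r)) =
     \prod_(i <- r) mp_coef (F i) (D i).
Proof.
move=> sD FD; elim: r => [|i r [IH1 IH2]].
  by rewrite !big_nil; split; [exact: exps_le_const | exact: mp_coef_const1].
have sz : all (fun d => size d == m) (map D r).
  by elim: (r) => //= j r0 ->; rewrite sD eqxx.
rewrite !big_cons map_cons /=; split; first exact: exps_le_mul.
by rewrite mp_coef_mul_top ?IH2 // sD size_sumv.
Qed.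

Lemma mp_pow_top m p d n : size d = m -> exps_le p d ->
  exps_le (mp_pow m p n) (scalev n d) /\
  mp_coef (mp_pow m p n) (scalev n d) = mp_coef p d ^+ n.
Proof.
move=> sd pd; elim: n => [|n [IH1 IH2]].
  by rewrite scalev0 sd; split; [exact: exps_le_const | exact: mp_coef_const1].
rewrite /mp_pow iterS -/(mp_pow m p n) -addv_scalev; split; first exact: exps_le_mul.
by rewrite mp_coef_mul_top ?IH2 ?exprS // size_scalev.
Qed.

Lemma exps_le_linear m k a b :
  exps_le (mp_add (mp_scale a (mp_var m k.+1)) (mp_const m b)) (unitv m k).
Proof. by rewrite /exps_le /= lev_refl /= andbT -{1}(size_unitv m k) lev0. Qed.

Lemma mp_coef_linear m k a b : (k < m)%N ->
  mp_coef (mp_add (mp_scale a (mp_var m k.+1)) (mp_const m b)) (unitv m k) = a.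
Proof.
move=> km; rewrite /mp_coef /= !big_cons big_nil /= -/(unitv m k) eqxx.
by rewrite (negbTE (unitv_neq0 km)) mulr1 addr0.
Qed.

Lemma mp_falling_top m k c :
  exps_le (mp_falling m k.+1 c) (scalev c (unitv m k)) /\
  ((k < m)%N -> mp_coef (mp_falling m k.+1 c) (scalev c (unitv m k)) = 1).
Proof.
have [lec coefE] := mp_bigmul_top (index_iota 0 c) (fun=> size_unitv m k)
  (fun j => exps_le_linear m k 1 (- j%:R)).
have E : [seq unitv m k | _ <- index_iota 0 c] = nseq c (unitv m k).
  by rewrite /index_iota subn0 -[in RHS](size_iota 0 c); elim: (iota 0 c) => //= x s ->.
rewrite E sumv_nseq ?size_unitv // in lec coefE; split; first exact: lec.
move=> km; rewrite /mp_falling coefE; apply: big1 => j _.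
by have := mp_coef_linear 1 (- j%:R) km; rewrite /mp_scale /= mul1r.
Qed.

Definition cycle_prod (m : nat) (a : seq nat) : mpoly :=
  \big[mp_mul/mp_const m 1]_(0 <= k < m)
     mp_pow m (mp_add (mp_scale (k.+1)%:R (mp_var m k.+1)) (mp_const m (-1))) (nth 0%N a k).

Definition falling_prod (m : nat) (e : seq nat) : mpoly :=
  \big[mp_mul/mp_const m 1]_(0 <= k < m) mp_falling m k.+1 (nth 0%N e k).

Lemma cycle_prod_top m a : size a = m ->
  exps_le (cycle_prod m a) a /\
  mp_coef (cycle_prod m a) a = \prod_(0 <= k < m) (k.+1)%:R ^+ nth 0%N a k.
Proof.
move=> sa; have linear_top k := mp_pow_top (nth 0%N a k) (size_unitv m k)
  (exps_le_linear m k (k.+1)%:R (-1)).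
have [lea coefE] := mp_bigmul_top (index_iota 0 m)
  (fun k => etrans (size_scalev _ _) (size_unitv m k)) (fun k => (linear_top k).1).
rewrite sumv_unitv // in lea coefE; split; first exact: lea.
rewrite /cycle_prod coefE big_seq [RHS]big_seq; apply: eq_bigr => k.
by rewrite mem_index_iota => /andP[_ km]; rewrite (linear_top k).2 mp_coef_linear.
Qed.

Lemma falling_prod_top m e : size e = m ->
  exps_le (falling_prod m e) e /\ mp_coef (falling_prod m e) e = 1.
Proof.
move=> se.
have [lee coefE] := mp_bigmul_top (index_iota 0 m)
  (fun k => etrans (size_scalev _ _) (size_unitv m k))
  (fun k => (mp_falling_top m k (nth 0%N e k)).1).
rewrite sumv_unitv // in lee coefE; split; first exact: lee.
rewrite /falling_prod coefE big_seq; apply: big1 => k.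
by rewrite mem_index_iota => /andP[_ km]; apply: (mp_falling_top m k _).2.
Qed.

Lemma mem_vecs len bound v :
  (v \in vecs len bound) = (size v == len) && all (fun x => x <= bound)%N v.
Proof.
elim: len v => [|len IH] v; first by case: v.
have iotaE : 0%N :: iota 1 bound = iota 0 bound.+1 by [].
apply/allpairsP/idP => [[[y w] /= [yi wi ->]]|].
  move: wi; rewrite IH /= eqSS => /andP[-> ->]; rewrite andbT.
  by move: yi; rewrite iotaE mem_iota.
case: v => // x v /=; rewrite eqSS => /andP[sv /andP[xb av]]; exists (x, v) => /=.
by rewrite iotaE mem_iota /= ltnS IH sv av.
Qed.

Definition weight (m : nat) (c : seq nat) : nat := (\sum_(0 <= k < m) k.+1 * nth 0%N c k)%N.

Lemma mem_cycle_types m a :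
  (a \in cycle_types m) = [&& size a == m, all (fun x => x <= m)%N a & weight m a == m].
Proof. by rewrite mem_filter mem_vecs andbC andbA. Qed.

Lemma size_cycle_type m a : a \in cycle_types m -> size a = m.
Proof. by rewrite mem_cycle_types => /andP[/eqP]. Qed.

Lemma weight_cycle_type m a : a \in cycle_types m -> weight m a = m.
Proof. by rewrite mem_cycle_types => /and3P[_ _ /eqP]. Qed.

(* The weight is strictly monotone for [lev], as all its coefficients are positive. *)
Lemma lev_weight_eq m c e : size e = m -> lev c e -> weight m c = weight m e -> c = e.
Proof.
move=> se ce we; have sc := lev_size ce.
have : (\sum_(0 <= k < m) (k.+1 * nth 0%N e k - k.+1 * nth 0%N c k))%N == 0%N.
  rewrite sumnB; first by rewrite -/(weight m e) -/(weight m c) we subnn.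
  by move=> k _; rewrite leq_mul2l lev_nth ?orbT.
rewrite sum_nat_seq_eq0 => /allP H.
apply: (@eq_from_nth _ 0%N); first by rewrite sc.
rewrite sc se => j jm; have := H j; rewrite mem_index_iota jm => /(_ isT) /=.
rewrite -mulnBr muln_eq0 /= subn_eq0 => ej.
by apply/eqP; rewrite eqn_leq lev_nth.
Qed.

(* The cycle type [(1^(m - h), h)], as a multiplicity vector. *)
Definition hook_type (m h : nat) : seq nat :=
  [seq ((k == 0%N) * (m - h) + (k == h.-1))%N | k <- iota 0 m].

Lemma size_hook_type m h : size (hook_type m h) = m.
Proof. by rewrite size_map size_iota. Qed.

Lemma nth_hook_type m h k : (k < m)%N ->
  nth 0%N (hook_type m h) k = ((k == 0%N) * (m - h) + (k == h.-1))%N.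
Proof. by move=> km; rewrite (nth_map 0%N) ?size_iota // nth_iota. Qed.

Lemma hook_type_cycle_type m h : (1 <= h <= m)%N -> hook_type m h \in cycle_types m.
Proof.
move=> /andP[h1 hm]; rewrite mem_cycle_types size_hook_type eqxx /=; apply/andP; split.
  by apply/allP => x /mapP [k _ ->]; case: (k == 0%N); case: (k == h.-1) => /=; lia.
rewrite /weight (eq_big_nat _ _ (F2 := fun k =>
  ((1 * (m - h)) * (0 == k) + h.-1.+1 * (h.-1 == k))%N)); last first.
  move=> k /andP[_ km]; rewrite nth_hook_type //.
  by case: (eqVneq k 0%N) => [->|k0]; case: (eqVneq k h.-1) => [e|kh]; rewrite ?e /= ?eqxx; lia.
by rewrite big_split /= !sum_nat_delta //; lia.
Qed.

Lemma flatten_map_nil (T : Type) (f : nat -> seq T) s :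
  {in s, forall k, f k = [::]} -> flatten (map f s) = [::].
Proof. by elim: s => //= k s IH f0; rewrite f0 ?mem_head // IH // => j js; rewrite f0 // inE js orbT. Qed.

Lemma cyc_list_hook_type m h : (1 <= h <= m)%N ->
  cyc_list m (hook_type m h) = nseq (m - h) 1%N ++ [:: h].
Proof.
move=> /andP[h1 hm]; rewrite /cyc_list.
set F := fun k => nseq _ k.+1.
have F0 k : (k < m)%N -> k != 0%N -> k != h.-1 -> F k = [::].
  by move=> km /negbTE k0 /negbTE kh; rewrite /F nth_hook_type // k0 kh.
have -> : iota 0 m = rcons (iota 0 h.-1) h.-1 ++ iota h (m - h).
  have ih : iota 0 h = rcons (iota 0 h.-1) h.-1.
    by rewrite -cats1 -{1}(prednK h1) -addn1 iotaD.
  by rewrite -ih -iotaD subnKC.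
rewrite map_cat flatten_cat (@flatten_map_nil _ F (iota h _)) ?cats0; last first.
  by move=> k; rewrite mem_iota => /andP[hk km]; apply: F0; lia.
rewrite map_rcons flatten_rcons {2}/F nth_hook_type; last by lia.
rewrite eqxx; have [h_1|h_gt1] := posnP h.-1.
  by rewrite h_1 /= mul1n nseqD; congr (_ ++ [:: _]); lia.
rewrite -(prednK h_gt1) /= (@flatten_map_nil _ F); last first.
  by move=> k; rewrite mem_iota => /andP[k1 kh]; apply: F0; lia.
rewrite /F nth_hook_type /=; last by lia.
rewrite eq_sym (negbTE (lt0n_neq0 h_gt1)) mul1n addn0 cats0.
by congr (_ ++ [:: _]); lia.
Qed.

Definition charcoef (mu : seq nat) (m : nat) (a : seq nat) : rat :=
  (chi mu (cyc_list m a))%:~R / (zee m a)%:R.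

(* The polynomial [q_mu] before the falling-factorial map [down]. *)
Definition charsum (mu : seq nat) (m : nat) : mpoly :=
  \big[mp_add/[::]]_(a <- cycle_types m) mp_scale (charcoef mu m a) (cycle_prod m a).

Lemma charpolyE mu : charpoly mu = down (sumn mu) (charsum mu (sumn mu)).
Proof. by []. Qed.

Lemma downE m p : down m p = \big[mp_add/[::]]_(t <- p) mp_scale t.1 (falling_prod m t.2).
Proof. by []. Qed.

Lemma mem_charsum mu m s : s \in charsum mu m ->
  exists2 a, a \in cycle_types m & lev s.2 a /\ (s.1 != 0 -> chi mu (cyc_list m a) != 0).
Proof.
case/mem_bigadd => a aC /mapP [u uP ->] /=; exists a => //; split.
  exact: exps_le_mem (cycle_prod_top (size_cycle_type aC)).1 uP.
rewrite mulf_eq0 negb_or => /andP[nz _]; apply: contra nz => /eqP c0.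
by rewrite /charcoef c0 mul0r.
Qed.

Lemma mem_charpoly mu t : t \in charpoly mu -> t.1 != 0 ->
  exists2 a, a \in cycle_types (sumn mu) & lev t.2 a /\ chi mu (cyc_list (sumn mu) a) != 0.
Proof.
rewrite charpolyE downE; case/mem_bigadd => s sQ /mapP [u uF ->] /=.
rewrite mulf_eq0 negb_or => /andP[s1 _].
have [a aC [sa ca]] := mem_charsum sQ; exists a => //; split; last exact: ca.
have szs : size s.2 = sumn mu by rewrite (lev_size sa) (size_cycle_type aC).
exact: lev_trans (exps_le_mem (falling_prod_top szs).1 uF) sa.
Qed.

Lemma has_var_ge_charpoly_le mu i : sorted geq mu -> all (fun p => 0 < p)%N mu ->
  (0 < i)%N -> has_var_ge i (charpoly mu) -> (i <= principal_hook mu)%N.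
Proof.
move=> mus mup i0 [c [nz [j [ij cj]]]].
have [t tP [tc t1]] := mp_coef_neq0 nz.
have [a aC [ta ca]] := mem_charpoly tP t1.
have aj : (0 < nth 0%N a j.-1)%N by apply: leq_trans cj _; rewrite -tc lev_nth.
have jm : (j.-1 < sumn mu)%N.
  by rewrite -(size_cycle_type aC) ltnNge; apply: contraTN aj => /(nth_default 0%N) ->.
apply: (leq_trans ij); rewrite -(prednK (leq_trans i0 ij)).
apply: (allP (chi_neq0_parts_le mus mup ca)); apply/flattenP.
exists (nseq (nth 0%N a j.-1) j.-1.+1); first by apply/mapP; exists j.-1; rewrite ?mem_iota.
by rewrite mem_nseq aj eqxx.
Qed.

Lemma lev_cycle_types_eq m c a :
  c \in cycle_types m -> a \in cycle_types m -> lev c a -> c = a.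
Proof.
move=> cC aC ca; apply: lev_weight_eq (size_cycle_type aC) ca _.
by rewrite !weight_cycle_type.
Qed.

Lemma mp_coef_charsum mu m a0 : a0 \in cycle_types m ->
  mp_coef (charsum mu m) a0 =
    (charcoef mu m a0 * mp_coef (cycle_prod m a0) a0) *+ count_mem a0 (cycle_types m).
Proof.
move=> a0C; rewrite /charsum mp_coef_bigadd.
rewrite (eq_big_seq (fun a => if a == a0 then charcoef mu m a0 *
    mp_coef (cycle_prod m a0) a0 else 0)); last first.
  move=> a aC; rewrite mp_coef_scale; have [->//|na] := eqVneq a a0.
  have [->|nz] := eqVneq (mp_coef (cycle_prod m a) a0) 0; first by rewrite mulr0.
  have := exps_le_coef (cycle_prod_top (size_cycle_type aC)).1 nz.
  by move/(lev_cycle_types_eq a0C aC)/esym/eqP; rewrite (negbTE na).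
rewrite -big_mkcond /= big_const_seq.
by elim: count => //= n ->; rewrite mulrS.
Qed.

(* Every exponent vector of [charsum] lies below some cycle type, so a cycle type
   is maximal among them and [down] leaves its coefficient unchanged. *)
Lemma mp_coef_down_charsum mu m a0 : a0 \in cycle_types m ->
  mp_coef (down m (charsum mu m)) a0 = mp_coef (charsum mu m) a0.
Proof.
move=> a0C; rewrite downE mp_coef_bigadd /mp_coef [RHS]big_mkcond.
apply: eq_big_seq => t tQ /=; rewrite -/(mp_coef (mp_scale _ _) _) mp_coef_scale.
have [a aC [ta _]] := mem_charsum tQ.
have [lt coefE] := falling_prod_top (etrans (lev_size ta) (size_cycle_type aC)).
have [<-|na] := eqVneq t.2 a0; first by rewrite coefE mulr1.
have [->|nz] := eqVneq (mp_coef (falling_prod m t.2) a0) 0; first by rewrite mulr0.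
have a0t := exps_le_coef lt nz.
have a0a : a0 = a := lev_cycle_types_eq a0C aC (lev_trans a0t ta).
have ta0 : t.2 = a0 by apply: lev_anti a0t; rewrite a0a.
by rewrite ta0 eqxx in na.
Qed.

Lemma principal_hook_le_sumn mu : all (fun p => 0 < p)%N mu -> (principal_hook mu <= sumn mu)%N.
Proof.
case: mu => //= x s /andP[x0 s0].
suff : (size s <= sumn s)%N by lia.
by elim: s s0 => //= y s IH /andP[y0 /IH]; lia.
Qed.

Lemma has_var_ge_charpoly_principal mu : sorted geq mu -> all (fun p => 0 < p)%N mu ->
  (0 < size mu)%N -> has_var_ge (principal_hook mu) (charpoly mu).
Proof.
move=> mus mup mu0; set m := sumn mu; set h := principal_hook mu.
have hm : (1 <= h <= m)%N.
  rewrite principal_hook_le_sumn // andbT /h principal_hookE //.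
  by have /= := allP mup _ (mem_nth 0%N mu0); lia.
have aC := hook_type_cycle_type hm.
exists (hook_type m h); split; last first.
  by exists h; rewrite nth_hook_type ?eqxx ?addn1; last by case/andP: hm; lia.
rewrite charpolyE -/m mp_coef_down_charsum // mp_coef_charsum // -mulr_natr.
rewrite !mulf_neq0 ?invr_eq0 ?pnatr_eq0 -?lt0n //.
- by rewrite cyc_list_hook_type // intr_eq0 chi_hook_neq0.
- by rewrite /zee prodn_gt0 // => k; rewrite muln_gt0 fact_gt0 expn_gt0.
- rewrite (cycle_prod_top (size_hook_type m h)).2 prodf_seq_neq0.
  by apply/allP => k _ /=; rewrite expf_neq0 // pnatr_eq0.
by rewrite -has_count has_pred1.
Qed.

Lemma has_var_ge_charpoly mu i : sorted geq mu -> all (fun p => 0 < p)%N mu ->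
  (0 < i)%N -> has_var_ge i (charpoly mu) <-> (i <= principal_hook mu)%N.
Proof.
move=> mus mup i0; split; first exact: has_var_ge_charpoly_le.
move=> ih; have mu0 : (0 < size mu)%N by case: (mu) ih => //=; rewrite leqNgt i0.
have [c [nz [j [hj cj]]]] := has_var_ge_charpoly_principal mus mup mu0.
by exists c; split => //; exists j; split => //; apply: leq_trans hj.
Qed.

Lemma hook21E lam : all (fun p => 0 < p)%N lam -> hook lam 2 1 = principal_hook (behead lam).
Proof.
case: lam => [|x [|y r]] //= /andP[x0 /andP[y0 r0]].
rewrite /hook /part /= y0 /conj_part; case: x x0 => // x _ /=.
by move: r0; rewrite all_count => /eqP ->; rewrite y0 /=; lia.
Qed.

Lemma hook12E lam : sorted geq lam -> all (fun p => 0 < p)%N lam ->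
  hook lam 1 2 = principal_hook (behead (conj_part lam)).
Proof.
case: lam => [|x r] //= _ /andP[x0 _].
rewrite /hook /part /= /conj_part /=.
by case: x x0 => // [[|x]] _ //=; rewrite size_map size_iota; lia.
Qed.

Lemma behead_conj_part_sorted lam : sorted geq lam -> all (fun p => 0 < p)%N lam ->
  sorted geq (behead (conj_part lam)) && all (fun p => 0 < p)%N (behead (conj_part lam)).
Proof.
case: lam => [|x r] //= lams /andP[x0 r0]; rewrite /conj_part /=.
case: x x0 lams => // x _ lams /=; apply/andP; split.
  rewrite sorted_map; apply: (sub_sorted _ (iota_ltn_sorted 2 x)) => a b /= ab.
  apply: leq_add; first by case: (leqP b x.+1) => hb //; rewrite (_ : a <= x.+1)%N //; lia.
  by rewrite (@sub_count _ (leq b) (leq a)) //= => p /=; apply: leq_trans; apply: ltnW.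
rewrite all_map; apply/allP => j; rewrite mem_iota => /andP[_ jx] /=.
by rewrite (_ : j <= x.+1)%N //; lia.
Qed.

Theorem lemma3p1 (n : nat) (lam : seq nat) (i : nat) :
  is_partition n lam -> (1 <= i)%N ->
  (((i <= hook lam 2 1)%N /\ (i <= hook lam 1 2)%N) <->
   (has_var_ge i (charpoly (behead lam)) /\
    has_var_ge i (charpoly (behead (conj_part lam))))).
Proof.
move=> /and3P[lams lamp _] i1.
have /andP[cs cp] := behead_conj_part_sorted lams lamp.
have bs : sorted geq (behead lam) by case: (lam) lams => //= x r; apply: path_sorted.
have bp : all (fun p => 0 < p)%N (behead lam) by case: (lam) lamp => //= x r /andP[].
by rewrite hook21E // hook12E // (has_var_ge_charpoly bs bp i1) (has_var_ge_charpoly cs cp i1).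
Qed.
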